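(* West's bijection from $\mathrm{Av}_n(123)$ to $\mathrm{Av}_n(132)$ maps $\mathrm{Av}_n(123,132^{\star})$ bijectively onto $\mathrm{Av}_n(132,123^{\star})$. In particular $|\mathrm{Av}_n(123,132^{\star})|=|\mathrm{Av}_n(132,123^{\star})|$.
   Context: For $w=w_1\cdots w_{m}\in S_{m}$ and $1\le i\le m+1$, let $w^i$ be obtained by inserting $m+1$ immediately before $w_i$ (at the end if $i=m+1$); site $i$ is active with respect to a pattern $y$ if $w^i$ avoids $y$. For $x\in S_n$, $\mathrm{small}_k(x)$ is the subsequence of entries $1,\dots,k$, and $\mathrm{Act}_j(x;y)$ is the set of active sites of $\mathrm{small}_{n+1-j}(x)$ with respect to $y$. The signature of $x$ with respect to $y$ is the word $\mathfrak{S}(x;y)=|\mathrm{Act}_1(x;y)|\cdots|\mathrm{Act}_{n-1}(x;y)|$. West proved that a permutation in $\mathrm{Av}_n(123)$ (resp. $\mathrm{Av}_n(132)$) is uniquely determined by its signature with respect to $123$ (resp. $132$), and that $\{\mathfrak{S}(x;123):x\in\mathrm{Av}_n(123)\}=\{\mathfrak{S}(x;132):x\in\mathrm{Av}_n(132)\}$; West's bijection sends $x\in\mathrm{Av}_n(123)$ to the unique $x'\in\mathrm{Av}_n(132)$ with $\mathfrak{S}(x';132)=\mathfrak{S}(x;123)$. $\mathrm{Av}_n(\cdot)$ denotes the set of permutations in $S_n$ avoiding the listed patterns. An occurrence of $132^{\star}$ in $x$ is a pair of indices $a<b<n$ with $x_a<x_{b+1}$ and $x_b=x_{b+1}+1$;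 an occurrence of $123^{\star}$ is a pair $a<b<n$ with $x_a<x_b$ and $x_{b+1}=x_b+1$. *)

(* Permutations of [n] are represented as sequences of naturals
   that are rearrangements of 1..n (one-line notation, 1-based values). *)
From mathcomp Require Import all_boot.
Set Implicit Arguments. Unset Strict Implicit. Unset Printing Implicit Defensive.

Definition is_perm (n : nat) (x : seq nat) : bool := perm_eq x (iota 1 n).

Fixpoint subseqs (s : seq nat) : seq (seq nat) :=
  if s is a :: s' then [seq a :: t | t <- subseqs s'] ++ subseqs s' else [:: [::]].

Definition order_iso (s y : seq nat) : bool :=
  (size s == size y) &&
  all (fun i => all (fun j => (nth 0 s i < nth 0 s j) == (nth 0 y i < nth 0 y j))
                    (iota 0 (size y)))
      (iota 0 (size y)).

Definition contains (y x : seq nat) : bool := has (fun s => order_iso s y) (subseqs x).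
Definition avoids (y x : seq nat) : bool := ~~ contains y x.

Definition p123 : seq nat := [:: 1; 2; 3].
Definition p132 : seq nat := [:: 1; 3; 2].

(* w^i : insert m+1 (m = size w) immediately before w_i (1-based i), at the end if i = m+1 *)
Definition insert_max (w : seq nat) (i : nat) : seq nat :=
  take i.-1 w ++ (size w).+1 :: drop i.-1 w.

Definition num_active (y w : seq nat) : nat :=
  count (fun i => avoids y (insert_max w i)) (iota 1 (size w).+1).

Definition small (k : nat) (x : seq nat) : seq nat := filter (fun v => v <= k) x.

Definition signature (n : nat) (y x : seq nat) : seq nat :=
  [seq num_active y (small (n.+1 - j) x) | j <- iota 1 n.-1].

(* West's bijection Av_n(123) -> Av_n(132): x |-> the (unique) x' in Av_n(132)
   with S(x';132) = S(x;123)  (default x if none exists, which West's theorem excludes) *)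
Definition west (n : nat) (x : seq nat) : seq nat :=
  head x [seq x' <- permutations (iota 1 n) |
            avoids p132 x' && (signature n p132 x' == signature n p123 x)].

(* occurrences of 132-star and 123-star (1-based indices a < b < n in the paper;
   here 0-based positions a < b with b+1 < n) *)
Definition contains132star (x : seq nat) : bool :=
  let n := size x in
  has (fun a => has (fun b =>
        [&& a < b, b.+1 < n, nth 0 x a < nth 0 x b.+1 & nth 0 x b == (nth 0 x b.+1).+1])
      (iota 0 n)) (iota 0 n).
Definition contains123star (x : seq nat) : bool :=
  let n := size x in
  has (fun a => has (fun b =>
        [&& a < b, b.+1 < n, nth 0 x a < nth 0 x b & nth 0 x b.+1 == (nth 0 x b).+1])
      (iota 0 n)) (iota 0 n).

Definition inA (n : nat) (x : seq nat) : bool :=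
  [&& is_perm n x, avoids p123 x & ~~ contains132star x].
Definition inB (n : nat) (x : seq nat) : bool :=
  [&& is_perm n x, avoids p132 x & ~~ contains123star x].

From mathcomp Require Import all_boot zify.
Set Implicit Arguments. Unset Strict Implicit. Unset Printing Implicit Defensive.

(* Av(123) and Av(132) are both generated by inserting the new maximum into
   an active site, and in both trees the number of active sites (the label)
   obeys the Catalan rule: a node with label k has children with labels
   2, ..., k+1.  For 123 the active sites of w are the k for which the first
   k entries decrease; for 132 they are the sites splitting w into a prefix
   lying above the suffix.  Equal signatures therefore mean that x and West's
   image x' sit at corresponding nodes of isomorphic trees: they have equal
   labels at every level.
   A 132* of x in Av_n(123) that does not already occur in small_{n-1} x uses
   n immediately followed by n-1, away from the front; a new 123* of x' in
   Av_n(132) uses n-1 immediately followed by n, away from the front.  Both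
   events are read off the labels in the same way,
   lab x = lab (small_{n-1} x) <= lab (small_{n-2} x),
   so by induction x avoids 132* exactly when x' avoids 123*. *)

(** * Pattern occurrences as index triples *)

Lemma has_subseqs0 (R : pred (seq nat)) s :
  (forall t, size t != 0 -> R t = false) -> has R (subseqs s) = R [::].
Proof.
move=> R0; elim: s => [|a s IH] /=; first by rewrite orbF.
by rewrite has_cat has_map IH (@eq_has _ _ pred0) ?has_pred0 // => t /=; rewrite R0.
Qed.

Lemma has_subseqs1 (R : pred (seq nat)) s :
  (forall t, size t != 1 -> R t = false) -> has R (subseqs s) = has (fun c => R [:: c]) s.
Proof.
move=> R1; elim: s => [|a s IH] /=; first by rewrite R1.
rewrite has_cat has_map IH has_subseqs0 // => t t0.
by apply: R1; rewrite /= eqSS.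
Qed.

Lemma has_subseqs2P (R : pred (seq nat)) s :
  (forall t, size t != 2 -> R t = false) ->
  reflect (exists i j, [/\ i < j, j < size s & R [:: nth 0 s i; nth 0 s j]])
          (has R (subseqs s)).
Proof.
move=> R2; elim: s => [|a s IH] /=.
  by rewrite R2 //; constructor => -[i [j []]].
rewrite has_cat has_map has_subseqs1 => [|t t1]; last by apply: R2; rewrite /= eqSS.
apply: (iffP orP).
- case=> [/(has_nthP 0) [j js Rj] | /IH [i [j [ij js Rij]]]].
  + by exists 0, j.+1.
  + by exists i.+1, j.+1.
- case=> [[|i] [[|j] []]] //= ij js Rij.
  + by left; apply/(has_nthP 0); exists j.
  + by right; apply/IH; exists i, j.
Qed.

Lemma has_subseqs3P (R : pred (seq nat)) s :
  (forall t, size t != 3 -> R t = false) ->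
  reflect (exists i j l, [/\ i < j, j < l, l < size s &
                            R [:: nth 0 s i; nth 0 s j; nth 0 s l]])
          (has R (subseqs s)).
Proof.
move=> R3; elim: s => [|a s IH] /=.
  by rewrite R3 //; constructor => -[i [j [l []]]].
rewrite has_cat has_map.
have R2 : forall t, size t != 2 -> R (a :: t) = false by move=> t t2; apply: R3; rewrite /= eqSS.
apply: (iffP orP).
- case=> [/(has_subseqs2P _ R2) [j [l [jl ls Rjl]]] | /IH [i [j [l [ij jl ls Rijl]]]]].
  + by exists 0, j.+1, l.+1.
  + by exists i.+1, j.+1, l.+1.
- case=> [[|i] [[|j] [[|l] []]]] //= ij jl ls Rijl.
  + by left; apply/(has_subseqs2P _ R2); exists j, l.
  + by right; apply/IH; exists i, j, l.
Qed.

Lemma order_iso_size s y : size s != size y -> order_iso s y = false.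
Proof. by rewrite /order_iso => /negbTE ->. Qed.

Lemma order_iso123 a b c : order_iso [:: a; b; c] p123 = (a < b < c).
Proof.
rewrite /order_iso /= !ltnn /=.
by case: (ltngtP a b); case: (ltngtP b c); case: (ltngtP a c) => //; lia.
Qed.

Lemma order_iso132 a b c : order_iso [:: a; b; c] p132 = (a < c < b).
Proof.
rewrite /order_iso /= !ltnn /=.
by case: (ltngtP a b); case: (ltngtP b c); case: (ltngtP a c) => //; lia.
Qed.

Lemma contains123P s :
  reflect (exists i j l, [/\ i < j, j < l, l < size s &
                            nth 0 s i < nth 0 s j < nth 0 s l])
          (contains p123 s).
Proof.
apply: (iffP (has_subseqs3P s (fun t => @order_iso_size t p123)));
  by move=> [i [j [l [ij jl ls H]]]]; exists i, j, l; rewrite /= order_iso123 in H *.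
Qed.

Lemma contains132P s :
  reflect (exists i j l, [/\ i < j, j < l, l < size s &
                            nth 0 s i < nth 0 s l < nth 0 s j])
          (contains p132 s).
Proof.
apply: (iffP (has_subseqs3P s (fun t => @order_iso_size t p132)));
  by move=> [i [j [l [ij jl ls H]]]]; exists i, j, l; rewrite /= order_iso132 in H *.
Qed.

Lemma subseqs_filter (p : pred nat) s : {subset subseqs (filter p s) <= subseqs s}.
Proof.
elim: s => [|a s IH] //= t; rewrite mem_cat.
case: (p a) => /=; last by move/IH => ->; rewrite orbT.
rewrite mem_cat => /orP [/mapP [u /IH us ->] | /IH ->]; last by rewrite orbT.
by rewrite map_f.
Qed.

Lemma avoids_small y m x : avoids y x -> avoids y (small m x).
Proof. by apply: contra => /hasP [t /subseqs_filter ts Rt]; apply/hasP; exists t. Qed.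

(* Sites are numbered from 0 here, from 1 in [insert_max]. *)
Definition ins (w : seq nat) (k : nat) : seq nat := insert_max w k.+1.

Definition bounded (w : seq nat) : Prop := forall p, nth 0 w p <= size w.

Lemma size_ins w k : size (ins w k) = (size w).+1.
Proof. by rewrite /ins /insert_max size_cat /= size_take size_drop; case: ifP; lia. Qed.

Lemma nth_ins w k p : k <= size w ->
  nth 0 (ins w k) p =
    if p < k then nth 0 w p else if p == k then (size w).+1 else nth 0 w p.-1.
Proof.
move=> kw; rewrite /ins /insert_max /= nth_cat size_takel //.
case: ltnP => pk; first by rewrite nth_take.
case: eqVneq => [->|pk']; first by rewrite subnn.
have -> : p - k = (p - k).-1.+1 by lia.
by rewrite /= nth_drop; congr nth; lia.
Qed.

Lemma nth_ins_site w k : k <= size w -> nth 0 (ins w k) k = (size w).+1.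
Proof. by move=> kw; rewrite nth_ins // ltnn eqxx. Qed.

Lemma nth_ins_lt w k p : k <= size w -> p < k -> nth 0 (ins w k) p = nth 0 w p.
Proof. by move=> kw pk; rewrite nth_ins // pk. Qed.

Lemma nth_ins_gt w k p : k <= size w -> k < p -> nth 0 (ins w k) p = nth 0 w p.-1.
Proof. by move=> kw kp; rewrite nth_ins // ltnNge (ltnW kp) /= gtn_eqF. Qed.

Lemma ltn_bump2 h i j : (bump h i < bump h j) = (i < j).
Proof. by rewrite !ltnNge leq_bump2. Qed.

Lemma bump_ltS h i n : i < n -> bump h i < n.+1.
Proof. by rewrite /bump; lia. Qed.

Lemma ltn_unbump2 h i j : i < j -> i != h -> j != h -> unbump h i < unbump h j.
Proof. by rewrite /unbump; lia. Qed.

Lemma unbump_lt h p n : h <= n -> p < n.+1 -> p != h -> unbump h p < n.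
Proof. by rewrite /unbump; lia. Qed.

Lemma nth_ins_bump w k p : k <= size w -> nth 0 (ins w k) (bump k p) = nth 0 w p.
Proof.
move=> kw; rewrite nth_ins // /bump.
case: (leqP k p) => kp; last by rewrite add0n kp.
by rewrite add1n ltnNge (leqW kp) gtn_eqF.
Qed.

Lemma nth_ins_unbump w k p : k <= size w -> p != k ->
  nth 0 (ins w k) p = nth 0 w (unbump k p).
Proof. by move=> kw pk; rewrite -[in LHS](unbumpK pk) nth_ins_bump. Qed.

Lemma bounded_ins w k : k <= size w -> bounded w -> bounded (ins w k).
Proof.
move=> kw bw p; rewrite size_ins nth_ins //.
by case: ifP => _; last case: ifP => _ //; apply/leqW/bw.
Qed.

Lemma nth_ins_eq_max w k p : k <= size w -> bounded w ->
  nth 0 (ins w k) p = (size w).+1 -> p = k.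
Proof.
move=> kw bw; rewrite nth_ins //.
case: ltnP => [pk|pk]; first by have := bw p; lia.
by case: eqVneq => [//|_]; have := bw p.-1; lia.
Qed.

(** * Active sites and the Catalan rule *)

Definition prefix_decreasing (w : seq nat) (k : nat) : Prop :=
  forall i j, i < j -> j < k -> nth 0 w j <= nth 0 w i.

Definition prefix_dominant (w : seq nat) (k : nat) : Prop :=
  forall i j, i < k -> k <= j -> j < size w -> nth 0 w j <= nth 0 w i.

Lemma active123P w k : k <= size w -> bounded w -> avoids p123 w ->
  reflect (prefix_decreasing w k) (avoids p123 (ins w k)).
Proof.
move=> kw bw /contains123P Hw; have bx := bounded_ins kw bw.
apply: (iffP (negPP (contains123P _))) => [Hx i j ij jk | Hd [i [j [l [ij jl]]]]].
  rewrite leqNgt; apply/negP => v; apply: Hx; exists i, j, k.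
  rewrite nth_ins_site // (nth_ins_lt kw (ltn_trans ij jk)) (nth_ins_lt kw jk).
  by rewrite size_ins v; split; rewrite // ltnS; apply: bw.
rewrite size_ins => ls /andP [v1 v2].
case: (eqVneq l k) => [lk|lk].
  subst l; move: v1; rewrite (nth_ins_lt kw (ltn_trans ij jl)) (nth_ins_lt kw jl).
  by have := Hd i j ij jl; lia.
case: (eqVneq j k) => [jk|jk].
  by move: v2; rewrite jk nth_ins_site //; have := bx l; rewrite size_ins; lia.
case: (eqVneq i k) => [ik|ik].
  by move: v1; rewrite ik nth_ins_site //; have := bx j; rewrite size_ins; lia.
rewrite !nth_ins_unbump // in v1 v2; apply: Hw.
exists (unbump k i), (unbump k j), (unbump k l).
by split; rewrite ?ltn_unbump2 ?unbump_lt ?v1.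
Qed.

Lemma active132P w k : k <= size w -> bounded w -> avoids p132 w ->
  reflect (prefix_dominant w k) (avoids p132 (ins w k)).
Proof.
move=> kw bw /contains132P Hw; have bx := bounded_ins kw bw.
apply: (iffP (negPP (contains132P _))) => [Hx i j ik kj jw | Hd [i [j [l [ij jl]]]]].
  rewrite leqNgt; apply/negP => v; apply: Hx; exists i, k, (bump k j).
  rewrite nth_ins_bump // nth_ins_site // (nth_ins_lt kw ik) size_ins v.
  by split; rewrite ?bump_ltS // ?ltnS; [rewrite /bump; lia | apply: bw].
rewrite size_ins => ls /andP [v1 v2].
case: (eqVneq j k) => [jk|jk].
  subst j; move: v1; rewrite (nth_ins_lt kw ij) (nth_ins_gt kw jl).
  by have := Hd i l.-1 ij ltac:(lia) ltac:(lia); lia.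
case: (eqVneq l k) => [lk|lk].
  by move: v2; rewrite lk nth_ins_site //; have := bx j; rewrite size_ins; lia.
case: (eqVneq i k) => [ik|ik].
  by move: v1; rewrite ik nth_ins_site //; have := bx l; rewrite size_ins; lia.
rewrite !nth_ins_unbump // in v1 v2; apply: Hw.
exists (unbump k i), (unbump k j), (unbump k l).
by split; rewrite ?ltn_unbump2 ?unbump_lt ?v1.
Qed.

Lemma num_active_ins y w :
  num_active y w = count (fun k => avoids y (ins w k)) (iota 0 (size w).+1).
Proof. by rewrite /num_active -[1]addn0 iotaDl count_map. Qed.

Lemma active123_ins w k j : k <= size w -> bounded w -> avoids p123 w ->
  avoids p123 (ins w k) -> j <= (size w).+1 ->
  avoids p123 (ins (ins w k) j) = (j <= k) || (k == 0) && avoids p123 (ins w j.-1).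
Proof.
move=> kw bw aw ak jx; have bx := bounded_ins kw bw.
have /(active123P kw bw aw) Dk := ak.
apply/(active123P _ bx ak)/idP; first by rewrite size_ins.
- move=> Dx; case: (leqP j k) => [//|kj] /=.
  case: (eqVneq k 0) => [k0|k0] /=.
    subst k; apply/(active123P _ bw aw); first lia.
    by move=> i i' ii' i'j; have := Dx i.+1 i'.+1 ii' ltac:(lia); rewrite !nth_ins.
  have := Dx 0 k ltac:(lia) kj; rewrite nth_ins_site // (nth_ins_lt kw (_ : 0 < k)); last lia.
  by have := bw 0; lia.
- case/orP=> [jk | /andP [/eqP k0 aj]] i i' ii' i'j.
    by rewrite !(nth_ins_lt kw) ?Dk //; lia.
  subst k; have /(active123P _ bw aw) Dj := aj.
  case: i ii' => [|i] ii'.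
    by rewrite nth_ins_site //; have := bx i'; rewrite size_ins.
  by rewrite !nth_ins_gt //= ?Dj //; lia.
Qed.

Lemma map_succ_iota m n : [seq i.+1 | i <- iota m n] = iota m.+1 n.
Proof. by elim: n m => //= n IH m; rewrite IH. Qed.

Lemma count_iota_ltn b n : count (fun j => j < b) (iota 0 n) = minn b n.
Proof.
elim: n => [|n IH]; first by rewrite minn0.
by rewrite -addn1 iotaD count_cat IH /= add0n; case: (ltnP n b) => ? /=; lia.
Qed.

Lemma count_iota_split (P : pred nat) k n : k <= n ->
  count P (iota 0 n) = count P (iota 0 k) + count P (iota k (n - k)).
Proof. by move=> kn; rewrite -count_cat -iotaD subnKC. Qed.

Lemma num_active123_ins w k : k <= size w -> bounded w -> avoids p123 w ->
  avoids p123 (ins w k) ->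
  num_active p123 (ins w k) = if k == 0 then (num_active p123 w).+1 else k.+1.
Proof.
move=> kw bw aw ak; rewrite num_active_ins size_ins.
rewrite (eq_in_count (a2 := fun j => (j <= k) || (k == 0) && avoids p123 (ins w j.-1)));
  last by move=> j; rewrite mem_iota => /andP [_ jx]; apply: active123_ins.
case: eqVneq => [->|k0]; last by rewrite (eq_count (a2 := fun j => j < k.+1)) ?count_iota_ltn;
  [lia | move=> j /=; rewrite orbF].
by rewrite num_active_ins /= -map_succ_iota count_map.
Qed.

Lemma filter_iota_downward (P : pred nat) n :
  (forall i j, i <= j -> j < n -> P j -> P i) ->
  filter P (iota 0 n) = iota 0 (count P (iota 0 n)).
Proof.
elim: n => [|n IH] Pdown //.
have {}IH := IH (fun i j ij jn => Pdown i j ij (ltnW jn)).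
rewrite -addn1 iotaD filter_cat count_cat IH /= add0n.
case Pn: (P n) => /=; last by rewrite cats0 !addn0.
have -> : count P (iota 0 n) = n.
  rewrite (eq_in_count (a2 := predT)) ?count_predT ?size_iota // => i.
  by rewrite mem_iota add0n => /andP [_ ilt]; apply: (Pdown i n) => //; apply: ltnW.
by rewrite -[in RHS]addn1 iotaD.
Qed.

Lemma active123_sites w : bounded w -> avoids p123 w ->
  [seq k <- iota 0 (size w).+1 | avoids p123 (ins w k)] = iota 0 (num_active p123 w).
Proof.
move=> bw aw; rewrite num_active_ins; apply: filter_iota_downward.
move=> i j ij jw /(active123P _ bw aw) Dj; apply/(active123P _ bw aw); first lia.
by move=> a b ab bi; apply: Dj; lia.
Qed.

Lemma active123_site0 w : bounded w -> avoids p123 w -> avoids p123 (ins w 0).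
Proof. by move=> bw aw; apply/(active123P _ bw aw). Qed.

Lemma active132_site0 w : bounded w -> avoids p132 w -> avoids p132 (ins w 0).
Proof. by move=> bw aw; apply/(active132P _ bw aw). Qed.

Lemma children_labels123 w : bounded w -> avoids p123 w ->
  perm_eq [seq num_active p123 (ins w k) | k <- iota 0 (size w).+1 & avoids p123 (ins w k)]
          (iota 2 (num_active p123 w)).
Proof.
move=> bw aw; have sites := active123_sites bw aw; have a0 := active123_site0 bw aw.
have site k : k \in iota 0 (num_active p123 w) -> k <= size w /\ avoids p123 (ins w k).
  by rewrite -sites mem_filter mem_iota ltnS => /and3P [].
have : 0 \in iota 0 (num_active p123 w) by rewrite -sites mem_filter a0.
rewrite sites; case E: (num_active p123 w) site => [|L] // site _ /=.
have -> : [seq num_active p123 (ins w k) | k <- iota 1 L] = iota 2 L.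
  rewrite -(map_succ_iota 1); apply/eq_in_map => k kL.
  have [kw ak] : k <= size w /\ avoids p123 (ins w k).
    by apply: site; move: kL; rewrite !mem_iota; lia.
  by rewrite num_active123_ins // gtn_eqF //; move: kL; rewrite mem_iota; lia.
rewrite num_active123_ins //= E.
by rewrite -[2 :: _]/(iota 2 L.+1) -[L.+1]addn1 iotaD cats1 perm_sym perm_rcons addn1.
Qed.

Lemma active132_ins w k j : k <= size w -> bounded w -> avoids p132 w ->
  avoids p132 (ins w k) -> j <= (size w).+1 ->
  avoids p132 (ins (ins w k) j) = (j == 0) || (k < j) && avoids p132 (ins w j.-1).
Proof.
move=> kw bw aw ak jx; have bx := bounded_ins kw bw.
have /(active132P kw bw aw) Ck := ak.
apply/(active132P _ bx ak)/idP; first by rewrite size_ins.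
- move=> Cx; case: (eqVneq j 0) => [//|j0] /=.
  case: (leqP j k) => [jk|kj] /=.
    have := Cx 0 k ltac:(lia) jk; rewrite size_ins nth_ins_site //.
    by rewrite (nth_ins_lt kw (_ : 0 < k)); [have := bw 0|]; lia.
  apply/(active132P _ bw aw); first lia.
  move=> i i' ij ji' i'w; have := Cx (bump k i) (bump k i').
  rewrite !nth_ins_bump // size_ins; apply; rewrite /bump; lia.
- case/orP=> [/eqP -> | /andP [kj aj]] //.
  have /(active132P _ bw aw) Cj := aj; move=> i i' ij ji'; rewrite size_ins => i'x.
  case: (eqVneq i k) => [ik|ik].
    by rewrite ik nth_ins_site //; have := bx i'; rewrite size_ins.
  rewrite !nth_ins_unbump //; last lia.
  apply: Cj; rewrite /unbump; lia.
Qed.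

Lemma num_active132_ins w k : k <= size w -> bounded w -> avoids p132 w ->
  avoids p132 (ins w k) ->
  num_active p132 (ins w k) =
    (count (fun j => avoids p132 (ins w j)) (iota k ((size w).+1 - k))).+1.
Proof.
move=> kw bw aw ak; rewrite num_active_ins size_ins.
rewrite (eq_in_count (a2 := fun j => (j == 0) || (k < j) && avoids p132 (ins w j.-1)));
  last by move=> j; rewrite mem_iota => /andP [_ jx]; apply: active132_ins.
have -> : iota 0 (size w).+2 = 0 :: [seq j.+1 | j <- iota 0 k ++ iota k ((size w).+1 - k)].
  by rewrite -iotaD subnKC ?leqW // map_succ_iota.
rewrite /= count_map count_cat add1n.
rewrite (eq_in_count (a1 := preim _ _) (a2 := pred0)) ?count_pred0 => [|j]; last first.
  by rewrite mem_iota /= => jk; rewrite ltnNge jk.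
by congr S; apply: eq_in_count => j; rewrite mem_iota /= ltnS => /andP [-> _].
Qed.

Lemma count_suffixes_filter_iota (P : pred nat) b n :
  [seq count P (iota i (b + n - i)) | i <- iota b n & P i] = rev (iota 1 (count P (iota b n))).
Proof.
elim: n b => [|n IH] b //=.
rewrite addnS -addSn; case Pb: (P b) => /=; rewrite IH // addSn subSn ?leq_addr // addKn /= Pb.
set c := count P _; rewrite add0n -[1 :: _]/(iota 1 c.+1) -[c.+1]addn1 iotaD rev_cat.
by rewrite add1n.
Qed.

Lemma children_labels132 w : bounded w -> avoids p132 w ->
  perm_eq [seq num_active p132 (ins w k) | k <- iota 0 (size w).+1 & avoids p132 (ins w k)]
          (iota 2 (num_active p132 w)).
Proof.
move=> bw aw; set P := fun j => avoids p132 (ins w j).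
have -> : [seq num_active p132 (ins w k) | k <- iota 0 (size w).+1 & P k] =
          [seq i.+1 | i <- [seq count P (iota k (0 + (size w).+1 - k))
                             | k <- iota 0 (size w).+1 & P k]].
  rewrite -map_comp; apply/eq_in_map => k.
  by rewrite mem_filter mem_iota ltnS => /and3P [ak _ kw]; rewrite /= num_active132_ins.
by rewrite count_suffixes_filter_iota map_rev map_succ_iota perm_rev num_active_ins.
Qed.

Section Permutations.

Variables (n : nat) (x : seq nat).
Hypothesis px : is_perm n x.

Lemma is_perm_size : size x = n.
Proof. by rewrite (perm_size px) size_iota. Qed.

Lemma is_perm_mem v : (v \in x) = (0 < v <= n).
Proof. by rewrite (perm_mem px) mem_iota add1n ltnS. Qed.

Lemma is_perm_bounded : bounded x.
Proof.
move=> p; case: (ltnP p (size x)) => [ltpx|]; last by move/(nth_default 0) ->.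
by move: (mem_nth 0 ltpx); rewrite is_perm_mem is_perm_size => /andP [].
Qed.

Lemma is_perm_ins k : is_perm n.+1 (ins x k).
Proof.
rewrite /is_perm /ins /insert_max is_perm_size -cat1s perm_catCA cat1s cat_take_drop.
by rewrite -[n.+1]addn1 iotaD cats1 perm_sym perm_rcons add1n addn1 perm_cons perm_sym.
Qed.

Lemma small_id : small n x = x.
Proof. by apply/all_filterP/allP => v; rewrite is_perm_mem => /andP []. Qed.

Lemma small_ins j k : j <= n -> small j (ins x k) = small j x.
Proof.
move=> jn; rewrite /small /ins /insert_max filter_cat /= is_perm_size.
by rewrite leqNgt ltnS jn /= -filter_cat cat_take_drop.
Qed.

Lemma is_perm_small j : j <= n -> is_perm j (small j x).
Proof.
move=> jn; rewrite /is_perm /small.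
have -> : iota 1 j = [seq v <- iota 1 n | v <= j].
  rewrite -(subnKC jn) iotaD filter_cat (eq_in_filter (a2 := predT)) => [|v].
    rewrite filter_predT (eq_in_filter (a2 := pred0)) ?filter_pred0 ?cats0 // => v.
    by rewrite mem_iota /= => /andP [jv _]; rewrite leqNgt -add1n jv.
  by rewrite mem_iota add1n ltnS => /andP [].
exact: perm_filter.
Qed.

End Permutations.

Lemma small_small j m x : j <= m -> small j (small m x) = small j x.
Proof.
move=> jm; rewrite /small -filter_predI; apply: eq_filter => v /=.
by case: (leqP v j) => //= vj; apply: leq_trans jm.
Qed.

Lemma is_perm0 x : is_perm 0 x -> x = [::].
Proof. by move/is_perm_size; case: x. Qed.

Lemma is_perm_decomp n x : is_perm n.+1 x -> exists2 k, k <= n & x = ins (small n x) k.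
Proof.
move=> px; have ux : uniq x by rewrite (perm_uniq px) iota_uniq.
have mx : n.+1 \in x by rewrite (is_perm_mem px) leqnn.
move: px ux; case/splitPr: mx => u v px ux.
have := is_perm_size px; rewrite size_cat /= => sx.
move: ux; rewrite cat_uniq /= => /and4P [_ /norP [nu _] nv _].
have le_n t : t \in u ++ v -> t <= n.
  move=> tuv; have : t \in u ++ n.+1 :: v.
    by move: tuv; rewrite !mem_cat inE => /orP [] ->; rewrite ?orbT.
  rewrite (is_perm_mem px) => /andP [_ tn]; rewrite -ltnS ltn_neqAle tn andbT.
  by apply/eqP => tn1; move: tuv; rewrite tn1 mem_cat (negbTE nu) (negbTE nv).
have small_uv : small n (u ++ n.+1 :: v) = u ++ v.
  by rewrite /small filter_cat /= ltnn -filter_cat; apply/all_filterP/allP.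
exists (size u); first by rewrite -ltnS -sx addnS ltnS leq_addr.
rewrite [small _ _]small_uv /ins /insert_max /=.
by rewrite take_size_cat // drop_size_cat // size_cat -addnS sx.
Qed.

Lemma is_perm_decomp2 n x : is_perm n.+2 x ->
  exists z k' k, [/\ is_perm n z, k' <= n, k <= n.+1 & x = ins (ins z k') k].
Proof.
move=> px; have [k kn Ex] := is_perm_decomp px.
have [k' kn' Ew] := is_perm_decomp (is_perm_small px (leqnSn _)).
exists (small n x), k', k; split => //; first exact: (is_perm_small px (leqW (leqnSn n))).
by rewrite {1}Ex {1}Ew small_small.
Qed.

Lemma small_ins_ins n z k' k : is_perm n z ->
  small n.+1 (ins (ins z k') k) = ins z k' /\ small n (ins (ins z k') k) = z.
Proof.
move=> pz; have pw := is_perm_ins pz k'.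
by rewrite !(small_ins pw) // small_id // (small_ins pz) // small_id.
Qed.

(** * Star patterns across two levels of the tree *)

Lemma contains132starP x :
  reflect (exists a b, [/\ a < b, b.+1 < size x, nth 0 x a < nth 0 x b.+1 &
                           nth 0 x b = (nth 0 x b.+1).+1])
          (contains132star x).
Proof.
apply: (iffP hasP) => [[a _ /hasP [b _ /and4P [ab bx v /eqP e]]] | [a [b [ab bx v e]]]].
  by exists a, b.
exists a; first by rewrite mem_iota /=; lia.
by apply/hasP; exists b; rewrite ?mem_iota ?ab ?bx ?v ?e /=; lia.
Qed.

Lemma contains123starP x :
  reflect (exists a b, [/\ a < b, b.+1 < size x, nth 0 x a < nth 0 x b &
                           nth 0 x b.+1 = (nth 0 x b).+1])
          (contains123star x).
Proof.
apply: (iffP hasP) => [[a _ /hasP [b _ /and4P [ab bx v /eqP e]]] | [a [b [ab bx v e]]]].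
  by exists a, b.
exists a; first by rewrite mem_iota /=; lia.
by apply/hasP; exists b; rewrite ?mem_iota ?ab ?bx ?v ?e /=; lia.
Qed.

Lemma contains132star_ins w k : k <= size w -> bounded w -> prefix_decreasing w k ->
  contains132star (ins w k) <->
  contains132star w \/
  [/\ k < size w, nth 0 w k = size w & exists2 a, a < k & nth 0 w a < size w].
Proof.
move=> kw bw Dk; have bx := bounded_ins kw bw; split.
- case/contains132starP=> a [b [ab]]; rewrite size_ins => bx1 v e.
  case: (eqVneq b k) => [bk|bk].
    subst b; rewrite nth_ins_site // (nth_ins_lt kw ab) (nth_ins_gt kw (ltnSn k)) /= in v e.
    by case: e => e; right; split; [lia | rewrite e | exists a; rewrite // e].
  case: (eqVneq b.+1 k) => [bk1|bk1].
    by move: e; rewrite bk1 nth_ins_site //; have := bx b; rewrite size_ins; lia.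
  left; apply/contains132starP.
  case: (ltnP b.+1 k) => bk2.
    by exists a, b; rewrite !(nth_ins_lt kw) in v e; try split; lia.
  case: (eqVneq a k) => [ak|ak].
    by move: v; rewrite ak nth_ins_site //; have := bx b.+1; rewrite size_ins; lia.
  have ub : unbump k b.+1 = (unbump k b).+1 by rewrite /unbump; lia.
  rewrite !nth_ins_unbump // ub in v e.
  by exists (unbump k a), (unbump k b); split; rewrite ?ltn_unbump2 // -ub unbump_lt.
- case=> [/contains132starP [a [b [ab bw1 v e]]] | [kw1 wk [a ak wa]]];
    apply/contains132starP.
    case: (eqVneq k b.+1) => [kb|kb]; first by have := Dk a b ab; lia.
    have bS : (bump k b).+1 = bump k b.+1 by rewrite /bump; lia.
    exists (bump k a), (bump k b).
    by rewrite bS !nth_ins_bump // size_ins ltn_bump2 bump_ltS.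
  exists a, k; rewrite size_ins nth_ins_site // (nth_ins_lt kw ak).
  by rewrite (nth_ins_gt kw (ltnSn k)) /= wk.
Qed.

Lemma contains123star_ins w k : k <= size w -> bounded w -> prefix_dominant w k ->
  contains123star (ins w k) <->
  contains123star w \/
  [/\ 0 < k, nth 0 w k.-1 = size w & exists2 a, a < k.-1 & nth 0 w a < size w].
Proof.
move=> kw bw Ck; have bx := bounded_ins kw bw; split.
- case/contains123starP=> a [b [ab]]; rewrite size_ins => bx1 v e.
  case: (eqVneq b k) => [bk|bk].
    by move: e; rewrite bk nth_ins_site //; have := bx k.+1; rewrite size_ins; lia.
  case: (eqVneq b.+1 k) => [bk1|bk1].
    subst k; rewrite nth_ins_site // !(nth_ins_lt kw) // in v e; last lia.
    by case: e => e; right; split; [ | rewrite e | exists a; rewrite // e].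
  left; apply/contains123starP.
  case: (ltnP b.+1 k) => bk2.
    by exists a, b; rewrite !(nth_ins_lt kw) in v e; try split; lia.
  case: (eqVneq a k) => [ak|ak].
    by move: v; rewrite ak nth_ins_site //; have := bx b; rewrite size_ins; lia.
  have ub : unbump k b.+1 = (unbump k b).+1 by rewrite /unbump; lia.
  rewrite !nth_ins_unbump // ub in v e.
  by exists (unbump k a), (unbump k b); split; rewrite ?ltn_unbump2 // -ub unbump_lt.
- case=> [/contains123starP [a [b [ab bw1 v e]]] | [k0 wk [a ak wa]]];
    apply/contains123starP.
    case: (eqVneq k b.+1) => [kb|kb]; first by have := Ck b b.+1; lia.
    have bS : (bump k b).+1 = bump k b.+1 by rewrite /bump; lia.
    exists (bump k a), (bump k b).
    by rewrite bS !nth_ins_bump // size_ins ltn_bump2 bump_ltS.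
  exists a, k.-1; rewrite size_ins prednK // nth_ins_site // !(nth_ins_lt kw) ?wk //.
  all: lia.
Qed.

Lemma contains132star_ins_ins z k' k : k' <= size z -> bounded z ->
  k <= (size z).+1 -> prefix_decreasing (ins z k') k ->
  contains132star (ins (ins z k') k) = contains132star (ins z k') || (k == k') && (0 < k).
Proof.
move=> kz bz kw Dk; have bw := bounded_ins kz bz.
rewrite -(size_ins z k') in kw; apply/idP/idP.
  case/(contains132star_ins kw bw Dk) => [-> // | [_ wk [a ak _]]].
  rewrite size_ins in wk.
  by rewrite -(nth_ins_eq_max kz bz wk) eqxx (leq_ltn_trans (leq0n a) ak) orbT.
case/orP => [star | /andP [/eqP kk k0]]; apply/(contains132star_ins kw bw Dk); first by left.
right; subst k; rewrite size_ins nth_ins_site // ltnS.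
by split => //; exists 0; rewrite // nth_ins_lt // ltnS; apply: bz.
Qed.

Lemma contains123star_ins_ins z k' k : k' <= size z -> bounded z ->
  k <= (size z).+1 -> prefix_dominant (ins z k') k ->
  contains123star (ins (ins z k') k) = contains123star (ins z k') || (k == k'.+1) && (0 < k').
Proof.
move=> kz bz kw Ck; have bw := bounded_ins kz bz.
rewrite -(size_ins z k') in kw; apply/idP/idP.
  case/(contains123star_ins kw bw Ck) => [-> // | [k0 wk [a ak _]]].
  by rewrite size_ins in wk; rewrite -(nth_ins_eq_max kz bz wk) prednK // eqxx; lia.
case/orP => [star | /andP [/eqP kk k0]]; apply/(contains123star_ins kw bw Ck); first by left.
right; subst k; rewrite size_ins /= nth_ins_site //.
by split => //; exists 0; rewrite // nth_ins_lt // ltnS; apply: bz.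
Qed.

Lemma active123_lt_num_active w k : bounded w -> avoids p123 w ->
  k <= size w -> avoids p123 (ins w k) -> k < num_active p123 w.
Proof.
move=> bw aw kw ak; have := mem_iota 0 (num_active p123 w) k.
by rewrite -active123_sites // mem_filter ak mem_iota ltnS kw => /esym.
Qed.

Definition label_plateau (y z w x : seq nat) : bool :=
  (num_active y x == num_active y w) && (num_active y w <= num_active y z).

Lemma label_plateau123_ins_ins z k' k : bounded z -> avoids p123 z ->
  k' <= size z -> avoids p123 (ins z k') ->
  k <= (size z).+1 -> avoids p123 (ins (ins z k') k) ->
  label_plateau p123 z (ins z k') (ins (ins z k') k) = (k == k') && (0 < k).
Proof.
move=> bz az kz ak' kw ak; have bw := bounded_ins kz bz.
have kL := active123_lt_num_active bz az kz ak'.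
rewrite /label_plateau !num_active123_ins ?size_ins //.
by case: (eqVneq k 0) => k0; case: (eqVneq k' 0) => k'0; apply/idP/idP; lia.
Qed.

Lemma label_plateau132_ins_ins z k' k : bounded z -> avoids p132 z ->
  k' <= size z -> avoids p132 (ins z k') ->
  k <= (size z).+1 -> avoids p132 (ins (ins z k') k) ->
  label_plateau p132 z (ins z k') (ins (ins z k') k) = (k == k'.+1) && (0 < k').
Proof.
move=> bz az kz ak' kw ak; rewrite /label_plateau; have bw := bounded_ins kz bz.
set P := fun j => avoids p132 (ins z j); set Q := fun j => avoids p132 (ins (ins z k') j).
have Q_P j : j <= (size z).+1 -> Q j = (j == 0) || (k' < j) && P j.-1.
  by move=> jz; apply: active132_ins.
have Q_prefix : count Q (iota 0 k'.+1) = 1.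
  rewrite /= Q_P //= add1n (eq_in_count (a2 := pred0)) ?count_pred0 // => j.
  by rewrite mem_iota => jk; rewrite Q_P /=; lia.
have -> : (num_active p132 (ins (ins z k') k) == num_active p132 (ins z k')) =
          (count Q (iota 0 k) == 1).
  rewrite [num_active p132 (ins z k')]num_active_ins size_ins (count_iota_split _ (leqW kw)).
  by rewrite num_active132_ins ?size_ins // -/Q; apply/eqP/eqP; lia.
have -> : (num_active p132 (ins z k') <= num_active p132 z) = (0 < count P (iota 0 k')).
  rewrite [num_active p132 z]num_active_ins (count_iota_split _ (leqW kz)).
  by rewrite num_active132_ins // -/P; apply/idP/idP; lia.
congr (_ && _); last by case: (k') => [|j] //=; rewrite {1}/P active132_site0.
case: (eqVneq k k'.+1) => [-> | kk]; first by rewrite Q_prefix.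
move: ak; rewrite -/(Q k) Q_P // => /orP [/eqP -> // | /andP [kk' _]].
rewrite (@count_iota_split _ k'.+1) ?Q_prefix; last lia.
have -> : k - k'.+1 = (k - k'.+2).+1 by lia.
by rewrite /= Q_P //= ltnSn /P ak'.
Qed.

Lemma contains132star_small n x : is_perm n.+2 x -> avoids p123 x ->
  contains132star x =
    contains132star (small n.+1 x) || label_plateau p123 (small n x) (small n.+1 x) x.
Proof.
move=> px; have [z [k' [k [pz kz kw ->]]]] := is_perm_decomp2 px.
have [sw sz] := small_ins_ins k' k pz; rewrite sw sz => ax.
have aw : avoids p123 (ins z k') by rewrite -sw avoids_small.
have az : avoids p123 z by rewrite -sz avoids_small.
have bz := is_perm_bounded pz; rewrite -(is_perm_size pz) in kz kw.
rewrite label_plateau123_ins_ins // contains132star_ins_ins //.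
have kw' : k <= size (ins z k') by rewrite size_ins.
by apply/(active123P kw' (bounded_ins kz bz) aw).
Qed.

Lemma contains123star_small n x : is_perm n.+2 x -> avoids p132 x ->
  contains123star x =
    contains123star (small n.+1 x) || label_plateau p132 (small n x) (small n.+1 x) x.
Proof.
move=> px; have [z [k' [k [pz kz kw ->]]]] := is_perm_decomp2 px.
have [sw sz] := small_ins_ins k' k pz; rewrite sw sz => ax.
have aw : avoids p132 (ins z k') by rewrite -sw avoids_small.
have az : avoids p132 z by rewrite -sz avoids_small.
have bz := is_perm_bounded pz; rewrite -(is_perm_size pz) in kz kw.
rewrite label_plateau132_ins_ins // contains123star_ins_ins //.
have kw' : k <= size (ins z k') by rewrite size_ins.
by apply/(active132P kw' (bounded_ins kz bz) aw).
Qed.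

(** * Isomorphic generating trees *)

Definition same_labels (y1 y2 : seq nat) (n : nat) (x1 x2 : seq nat) : Prop :=
  forall j, j <= n -> num_active y1 (small j x1) = num_active y2 (small j x2).

Definition catalan_rule (y : seq nat) : Prop :=
  forall m w, is_perm m w -> avoids y w ->
  perm_eq [seq num_active y (ins w k) | k <- iota 0 m.+1 & avoids y (ins w k)]
          (iota 2 (num_active y w)).

Lemma catalan_rule123 : catalan_rule p123.
Proof.
move=> m w pw; rewrite -(is_perm_size pw).
exact: children_labels123 (is_perm_bounded pw).
Qed.

Lemma catalan_rule132 : catalan_rule p132.
Proof.
move=> m w pw; rewrite -(is_perm_size pw).
exact: children_labels132 (is_perm_bounded pw).
Qed.

Lemma uniq_map_inj_in (T1 T2 : eqType) (f : T1 -> T2) s :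
  uniq (map f s) -> {in s &, injective f}.
Proof.
elim: s => [|a s IH] //= /andP [fa_notin us] b c.
rewrite !inE => /predU1P [-> | bs] /predU1P [-> | cs] // E.
- by move: fa_notin; rewrite E map_f.
- by move: fa_notin; rewrite -E map_f.
- exact: IH.
Qed.

Section GeneratingTree.

Variables y1 y2 : seq nat.
Hypotheses (rule1 : catalan_rule y1) (rule2 : catalan_rule y2).

Lemma exists_same_labels n x :
  num_active y1 [::] = num_active y2 [::] -> avoids y2 [::] ->
  is_perm n x -> avoids y1 x ->
  exists x', [/\ is_perm n x', avoids y2 x' & same_labels y1 y2 n x x'].
Proof.
move=> root aroot; elim: n x => [|n IH] x px ax.
  by exists [::]; split => // j; rewrite leqn0 (is_perm0 px) => /eqP ->.
have pw := is_perm_small px (leqnSn n); have aw := avoids_small n ax.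
have [k kn Ex] := is_perm_decomp px.
have [w' [pw' aw' labels]] := IH _ pw aw.
have lab_w : num_active y1 (small n x) = num_active y2 w'.
  by have := labels n (leqnn n); rewrite (small_id pw) (small_id pw').
have : num_active y1 x \in iota 2 (num_active y2 w').
  rewrite -lab_w -(perm_mem (rule1 pw aw)) {1}Ex.
  by apply: map_f; rewrite mem_filter -Ex ax mem_iota.
rewrite -(perm_mem (rule2 pw' aw')) => /mapP [k' /[!mem_filter] /andP [ak' _] lab_x].
exists (ins w' k'); split => // [|j]; first exact: is_perm_ins.
rewrite leq_eqVlt ltnS => /orP [/eqP -> | jn].
  by rewrite small_id // small_id //; apply: is_perm_ins.
by rewrite -(small_small x jn) (small_ins pw' k' jn) labels.
Qed.

Lemma same_labels_inj n x1 x2 : is_perm n x1 -> is_perm n x2 ->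
  avoids y1 x1 -> avoids y1 x2 -> same_labels y1 y1 n x1 x2 -> x1 = x2.
Proof.
elim: n x1 x2 => [|n IH] x1 x2 p1 p2 a1 a2 labels.
  by rewrite (is_perm0 p1) (is_perm0 p2).
have [k1 kn1 E1] := is_perm_decomp p1; have [k2 kn2 E2] := is_perm_decomp p2.
have pw1 := is_perm_small p1 (leqnSn n); have aw1 := avoids_small n a1.
have ew : small n x1 = small n x2.
  apply: IH (is_perm_small p2 (leqnSn n)) aw1 (avoids_small n a2) _ => // j jn.
  by rewrite !small_small //; apply/labels/leqW.
have lab_x : num_active y1 x1 = num_active y1 x2.
  by have := labels n.+1 (leqnn _); rewrite (small_id p1) (small_id p2).
have := perm_uniq (rule1 pw1 aw1); rewrite iota_uniq => /uniq_map_inj_in k_inj.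
suff k12 : k1 = k2 by rewrite E1 E2 ew k12.
apply: k_inj.
- by rewrite mem_filter -E1 a1 mem_iota /= ltnS.
- by rewrite mem_filter ew -E2 a2 mem_iota /= ltnS.
- by rewrite /= -E1 ew -E2.
Qed.

End GeneratingTree.

Lemma same_labels_signature y1 y2 n x1 x2 :
  same_labels y1 y2 n x1 x2 -> signature n y1 x1 = signature n y2 x2.
Proof. by move=> labels; apply/eq_in_map => j; rewrite mem_iota => jn; apply: labels; lia. Qed.

Lemma signature_same_labels y1 y2 n x1 x2 : is_perm n x1 -> is_perm n x2 ->
  num_active y1 [::] = num_active y2 [::] -> num_active y1 [:: 1] = num_active y2 [:: 1] ->
  signature n y1 x1 = signature n y2 x2 -> same_labels y1 y2 n x1 x2.
Proof.
move=> p1 p2 lab0 lab1 sig [|[|j]] jn.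
- by rewrite !(is_perm0 (is_perm_small _ (leq0n n))).
- case: n p1 p2 jn {sig} => // n p1 p2 _.
  by rewrite !(perm_small_eq _ (is_perm_small _ (_ : 1 <= n.+1))).
- have := congr1 (nth 0 ^~ (n - j.+2)) sig.
  have jsig : n - j.+2 < size (iota 1 n.-1) by rewrite size_iota; lia.
  rewrite !(nth_map 0) // nth_iota; last by rewrite size_iota in jsig.
  by have -> : n.+1 - (1 + (n - j.+2)) = j.+2 by lia.
Qed.

Lemma contains132star_size x : size x < 3 -> contains132star x = false.
Proof. by move=> sx; apply/negbTE/contains132starP => -[a [b []]]; lia. Qed.

Lemma contains123star_size x : size x < 3 -> contains123star x = false.
Proof. by move=> sx; apply/negbTE/contains123starP => -[a [b []]]; lia. Qed.

Lemma same_labels_star n x x' : is_perm n x -> is_perm n x' ->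
  avoids p123 x -> avoids p132 x' -> same_labels p123 p132 n x x' ->
  contains132star x = contains123star x'.
Proof.
elim: n x x' => [|n IH] x x' px px' ax ax' labels.
  by rewrite contains132star_size ?contains123star_size ?(is_perm_size px) ?(is_perm_size px').
case: n IH px px' labels => [|n] IH px px' labels.
  by rewrite contains132star_size ?contains123star_size ?(is_perm_size px) ?(is_perm_size px').
rewrite (contains132star_small px ax) (contains123star_small px' ax').
rewrite (IH _ _ (is_perm_small px (leqnSn _)) (is_perm_small px' (leqnSn _)));
  [| exact: avoids_small | exact: avoids_small |]; last first.
  by move=> j jn; rewrite !small_small //; apply/labels/leqW.
have := labels n.+2 (leqnn _); rewrite (small_id px) (small_id px') /label_plateau => ->.
by rewrite (labels n.+1 (leqnSn _)) (labels n (leqW (leqnSn _))).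
Qed.

(** * West's bijection *)

Lemma count_bij_in (T : eqType) (f : T -> T) (A B : pred T) s : uniq s ->
  {subset A <= s} -> {subset B <= s} -> {in A, forall x, B (f x)} ->
  {in A &, injective f} -> (forall y, B y -> exists2 x, A x & f x = y) ->
  count A s = count B s.
Proof.
move=> us As Bs fAB finj fonto; rewrite -!size_filter -(size_map f).
apply/perm_size/uniq_perm; rewrite ?filter_uniq //.
  rewrite map_inj_in_uniq ?filter_uniq // => a b.
  by rewrite !mem_filter => /andP [Aa _] /andP [Ab _]; apply: finj.
move=> y; rewrite mem_filter; apply/mapP/andP => [[x] | [/fonto [x Ax <-] _]].
  by rewrite mem_filter => /andP [Ax _] ->; split; [apply: fAB | apply/Bs/fAB].
by exists x; rewrite // mem_filter Ax As.
Qed.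


Lemma avoids_nil y : 0 < size y -> avoids y [::].
Proof. by move=> y0; rewrite /avoids /contains /= order_iso_size // eq_sym -lt0n. Qed.

Lemma num_active_nil : num_active p123 [::] = num_active p132 [::].
Proof. by []. Qed.

Lemma west_spec n x : is_perm n x -> avoids p123 x ->
  [/\ is_perm n (west n x), avoids p132 (west n x) & same_labels p123 p132 n x (west n x)].
Proof.
move=> px ax.
have [x' [px' ax' labels]] :=
  exists_same_labels catalan_rule123 catalan_rule132 num_active_nil (@avoids_nil p132 isT) px ax.
set S := [seq y <- permutations (iota 1 n) |
            avoids p132 y && (signature n p132 y == signature n p123 x)].
have x'S : x' \in S by rewrite mem_filter ax' (same_labels_signature labels) eqxx mem_permutations.
have -> : west n x = head x S by [].
have : head x S \in S by move: x'S; case: (S) => // h t _; apply: mem_head.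
rewrite mem_filter mem_permutations => /andP [/andP [aw /eqP sig] pw].
by split => //; apply: signature_same_labels.
Qed.

Lemma west_inB n x : inA n x -> inB n (west n x).
Proof.
case/and3P=> px ax sx; have [pw aw labels] := west_spec px ax.
by rewrite /inB pw aw -(same_labels_star px pw ax aw labels).
Qed.

Lemma west_inj n : {in inA n &, injective (west n)}.
Proof.
move=> x1 x2 /and3P [p1 a1 _] /and3P [p2 a2 _] E.
have [_ _ labels1] := west_spec p1 a1; have [_ _ labels2] := west_spec p2 a2.
by apply: (same_labels_inj catalan_rule123 p1 p2 a1 a2) => j jn; rewrite labels1 // E labels2.
Qed.

Lemma west_onto n x' : inB n x' -> exists2 x, inA n x & west n x = x'.
Proof.
case/and3P=> px' ax' sx'.
have [x [px ax labels]] :=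
  exists_same_labels catalan_rule132 catalan_rule123 (esym num_active_nil)
                     (@avoids_nil p123 isT) px' ax'.
have labels' : same_labels p123 p132 n x x' by move=> j jn; rewrite labels.
exists x; first by rewrite /inA px ax (same_labels_star px px' ax ax' labels').
have [pw aw labels_w] := west_spec px ax.
by apply: (same_labels_inj catalan_rule132 pw px' aw ax') => j jn; rewrite -labels_w // labels.
Qed.

Theorem theorem3p18 (n : nat) :
  (* west maps Av_n(123,132-star) into Av_n(132,123-star) *)
  (forall x, inA n x -> inB n (west n x)) /\
  (* injectively *)
  (forall x1 x2, inA n x1 -> inA n x2 -> west n x1 = west n x2 -> x1 = x2) /\
  (* and onto *)
  (forall x', inB n x' -> exists2 x, inA n x & west n x = x') /\
  (* in particular the two classes are equinumerous *)
  count (inA n) (permutations (iota 1 n)) = count (inB n) (permutations (iota 1 n)).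
Proof.
have inj : forall x1 x2, inA n x1 -> inA n x2 -> west n x1 = west n x2 -> x1 = x2.
  by move=> x1 x2 A1 A2; apply: west_inj.
split; [exact: west_inB | split; [exact: inj | split; [exact: west_onto |]]].
apply: count_bij_in (west_inB (n:=n)) inj (west_onto (n:=n)); rewrite ?permutations_uniq //.
  by move=> x /and3P [px _ _]; rewrite mem_permutations.
by move=> x /and3P [px _ _]; rewrite mem_permutations.
Qed.
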